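(* Let $\theta\in(0,\pi)$. For any $r_1,r_2\in(0,\frac{\pi}{2})$ there exists, up to isometry, a unique spherical bigon of angle $\theta$ with sides labeled $1,2$ such that, for $i=1,2$, the disk $D_i\subset\mathbb{S}^2$ whose boundary contains side $i$ has radius $r_i$.
   Context: A spherical bigon is the intersection $D_1\cap D_2$ of two open round disks in the unit sphere $\mathbb{S}^2$ of radii less than $\frac{\pi}{2}$, neither containing the other; its two sides are the boundary arcs lying on $\partial D_1$ and $\partial D_2$, and its angle is the interior angle formed by the two sides at the corners. *)

From HB Require Import structures.
From mathcomp Require Import all_boot all_order all_algebra.
From mathcomp Require Import boolp classical_sets reals trigo.
Set Implicit Arguments. Unset Strict Implicit. Unset Printing Implicit Defensive.
Import Order.TTheory GRing.Theory Num.Theory.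
Local Open Scope ring_scope.
Local Open Scope classical_set_scope.

Section Sphere.
Variable R : realType.

Record vec3 := V3 { vx : R; vy : R; vz : R }.

Definition dot (u v : vec3) : R := vx u * vx v + vy u * vy v + vz u * vz v.
Definition vnorm (u : vec3) : R := Num.sqrt (dot u u).
Definition vopp (u : vec3) : vec3 := V3 (- vx u) (- vy u) (- vz u).
Definition cross (u v : vec3) : vec3 :=
  V3 (vy u * vz v - vz u * vy v)
     (vz u * vx v - vx u * vz v)
     (vx u * vy v - vy u * vx v).

Definition sphere : set vec3 := [set x | dot x x = 1].
Definition sdist (x y : vec3) : R := acos (dot x y).

Definition disk (c : vec3) (r : R) : set vec3 :=
  [set x | sphere x /\ sdist x c < r].
Definition circle (c : vec3) (r : R) : set vec3 :=
  [set x | sphere x /\ sdist x c = r].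
Definition cdisk (c : vec3) (r : R) : set vec3 :=
  [set x | sphere x /\ sdist x c <= r].

(* (c1,r1,c2,r2) defines a spherical bigon D1 ∩ D2: both are round disks of
   radius in (0, pi/2), the intersection is nonempty (so the bigon exists),
   and neither disk contains the other. *)
Definition is_bigon (c1 : vec3) (r1 : R) (c2 : vec3) (r2 : R) : Prop :=
  [/\ sphere c1, sphere c2, 0 < r1 < pi / 2 & 0 < r2 < pi / 2] /\
  [/\ disk c1 r1 `&` disk c2 r2 !=set0,
      ~ (disk c1 r1 `<=` disk c2 r2) & ~ (disk c2 r2 `<=` disk c1 r1)].

Definition bigon (c1 : vec3) (r1 : R) (c2 : vec3) (r2 : R) : set vec3 :=
  disk c1 r1 `&` disk c2 r2.
Definition side1 (c1 : vec3) (r1 : R) (c2 : vec3) (r2 : R) : set vec3 :=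
  circle c1 r1 `&` cdisk c2 r2.
Definition side2 (c1 : vec3) (r1 : R) (c2 : vec3) (r2 : R) : set vec3 :=
  cdisk c1 r1 `&` circle c2 r2.
Definition corner (c1 : vec3) (r1 : R) (c2 : vec3) (r2 : R) : set vec3 :=
  circle c1 r1 `&` circle c2 r2.

(* At a corner p, the side lying on the circle of center c leaves p in the
   tangent direction of that circle (parallel to p x c) which points into the
   other disk (of center c'), i.e. has nonnegative derivative of <., c'>. *)
Definition side_dir (p c c' : vec3) : vec3 :=
  let t := cross p c in if 0 <= dot t c' then t else vopp t.

Definition corner_angle (c1 c2 p : vec3) : R :=
  let t1 := side_dir p c1 c2 in
  let t2 := side_dir p c2 c1 in
  acos (dot t1 t2 / (vnorm t1 * vnorm t2)).

Definition bigon_has_angle (c1 : vec3) (r1 : R) (c2 : vec3) (r2 : R)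
    (theta : R) : Prop :=
  forall p, corner c1 r1 c2 r2 p -> corner_angle c1 c2 p = theta.

Definition sphere_isometry (f : vec3 -> vec3) : Prop :=
  forall x y, sphere x -> sphere y ->
    sphere (f x) /\ sdist (f x) (f y) = sdist x y.

Definition bigon_congruent (c1 : vec3) (r1 : R) (c2 : vec3) (r2 : R)
    (c1' : vec3) (r1' : R) (c2' : vec3) (r2' : R) : Prop :=
  exists f, [/\ sphere_isometry f,
    f @` bigon c1 r1 c2 r2 = bigon c1' r1' c2' r2',
    f @` side1 c1 r1 c2 r2 = side1 c1' r1' c2' r2' &
    f @` side2 c1 r1 c2 r2 = side2 c1' r1' c2' r2'].

End Sphere.

From HB Require Import structures.
From mathcomp Require Import all_boot all_order all_algebra.
From mathcomp Require Import boolp classical_sets reals trigo.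
From mathcomp Require Import ring lra.
Import Order.TTheory GRing.Theory Num.Theory.
Local Open Scope ring_scope.
Set Implicit Arguments. Unset Strict Implicit. Unset Printing Implicit Defensive.

(* A bigon with unit centres c1, c2 is governed by a = <c1, c2> = cos d, d the
   distance between the centres.  Nonempty intersection and non-containment
   force |r1 - r2| < d < r1 + r2, i.e. cos (r1 + r2) < a < cos (r1 - r2).  At a
   corner p the triple product <p, c1 x c2> squares to the Gram determinant
   (cos (r1 - r2) - a) (a - cos (r1 + r2)) > 0, so the sides cross
   transversally and the angle is given by the spherical law of cosines
   cos theta = (cos r1 cos r2 - a) / (sin r1 sin r2).  Hence theta determines a.
   Two pairs of centres with the same a are exchanged by the linear isometry
   taking the frame (c1, c2, c1 x c2) to (c1', c2', c1' x c2'), which maps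
   every set described through <x, x>, <x, c1>, <x, c2> to its primed
   counterpart.  For existence, put the centres on the equator at distance
   acos a. *)

Section VectorAlgebra.
Variable R : realType.
Implicit Types (u v w x y p : vec3 R).

Definition lincomb3 (a b c : R) u v w : vec3 R :=
  V3 (a * vx u + b * vx v + c * vx w) (a * vy u + b * vy v + c * vy w)
     (a * vz u + b * vz v + c * vz w).

Lemma lincomb3_100 u v w : lincomb3 1 0 0 u v w = u.
Proof. by case: u => ? ? ?; rewrite /lincomb3 /=; congr V3; ring. Qed.

Lemma lincomb3_010 u v w : lincomb3 0 1 0 u v w = v.
Proof. by case: v => ? ? ?; rewrite /lincomb3 /=; congr V3; ring. Qed.

Lemma lincomb3_001 u v w : lincomb3 0 0 1 u v w = w.
Proof. by case: w => ? ? ?; rewrite /lincomb3 /=; congr V3; ring. Qed.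

Lemma dotC u v : dot u v = dot v u.
Proof. by case: u => ? ? ?; case: v => ? ? ?; rewrite /dot /=; ring. Qed.

Lemma dot_ge0 u : 0 <= dot u u.
Proof. by case: u => a b c; rewrite /dot /=; nra. Qed.

Lemma dotNl u v : dot (vopp u) v = - dot u v.
Proof. by case: u => ? ? ?; case: v => ? ? ?; rewrite /dot /=; ring. Qed.

Lemma dotNr u v : dot u (vopp v) = - dot u v.
Proof. by rewrite dotC dotNl dotC. Qed.

Lemma vnormN u : vnorm (vopp u) = vnorm u.
Proof. by rewrite /vnorm dotNl dotNr opprK. Qed.

Lemma dot_crossl u v : dot (cross u v) u = 0.
Proof. by case: u => ? ? ?; case: v => ? ? ?; rewrite /dot /=; ring. Qed.

Lemma dot_crossr u v : dot (cross u v) v = 0.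
Proof. by case: u => ? ? ?; case: v => ? ? ?; rewrite /dot /=; ring. Qed.

Lemma dot_crossC p u v : dot (cross p u) v = - dot (cross p v) u.
Proof.
by case: p => ? ? ?; case: u => ? ? ?; case: v => ? ? ?; rewrite /dot /=; ring.
Qed.

Lemma dot_crossA p u v : dot (cross p u) v = dot p (cross u v).
Proof.
by case: p => ? ? ?; case: u => ? ? ?; case: v => ? ? ?; rewrite /dot /=; ring.
Qed.

Lemma dot_cross_cross p u v :
  dot (cross p u) (cross p v) = dot p p * dot u v - dot p v * dot p u.
Proof.
by case: p => ? ? ?; case: u => ? ? ?; case: v => ? ? ?; rewrite /dot /=; ring.
Qed.

Lemma dot_cross_sqr p u v :
  dot p (cross u v) ^+ 2 =
    dot p p * dot u u * dot v v + 2 * dot p u * dot p v * dot u v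
    - dot p p * dot u v ^+ 2 - dot u u * dot p v ^+ 2 - dot v v * dot p u ^+ 2.
Proof.
by case: p => ? ? ?; case: u => ? ? ?; case: v => ? ? ?; rewrite /dot /=; ring.
Qed.

Lemma dot_lincomb3l a b c u v w x :
  dot (lincomb3 a b c u v w) x = a * dot u x + b * dot v x + c * dot w x.
Proof.
by case: u => ? ? ?; case: v => ? ? ?; case: w => ? ? ?; case: x => ? ? ?;
  rewrite /dot /=; ring.
Qed.

Definition gram2 u v := dot u u * dot v v - dot u v ^+ 2.

Lemma dot_lincomb3_frame a b c a' b' c' u v :
  dot (lincomb3 a b c u v (cross u v)) (lincomb3 a' b' c' u v (cross u v)) =
    a * a' * dot u u + b * b' * dot v v + (a * b' + b * a') * dot u v
    + c * c' * gram2 u v.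
Proof.
by case: u => ? ? ?; case: v => ? ? ?; rewrite /gram2 /dot /=; ring.
Qed.

Lemma sphere_dot_bound x y : sphere x -> sphere y -> -1 <= dot x y <= 1.
Proof.
rewrite /sphere /= => hx hy.
have := dot_ge0 (cross x y); rewrite dot_cross_cross hx hy dotC.
by move=> ?; nra.
Qed.

End VectorAlgebra.

Section FrameMap.
Variable R : realType.
Implicit Types (u v x y : vec3 R).

(* The coefficients are the coordinates of x in the basis (u, v, u x v),
   cf. [frame_mapxx]. *)
Definition frame_map u v u' v' x : vec3 R :=
  lincomb3 ((dot x u * dot v v - dot x v * dot u v) / gram2 u v)
           ((dot x v * dot u u - dot x u * dot u v) / gram2 u v)
           (dot x (cross u v) / gram2 u v) u' v' (cross u' v').

Lemma frame_mapxx u v x : gram2 u v != 0 -> frame_map u v u v x = x.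
Proof.
rewrite /gram2; case: x => ? ? ?; case: u => ? ? ?; case: v => ? ? ?.
by rewrite /frame_map /gram2 /lincomb3 /dot /cross /= => ?; congr V3; field.
Qed.

Variables u v u' v' : vec3 R.
Hypotheses (uu : dot u' u' = dot u u) (vv : dot v' v' = dot v v)
  (uv : dot u' v' = dot u v) (g0 : gram2 u v != 0).

Lemma frame_map_dot x y :
  dot (frame_map u v u' v' x) (frame_map u v u' v' y) = dot x y.
Proof.
have -> : dot x y = dot (frame_map u v u v x) (frame_map u v u v y).
  by rewrite !frame_mapxx.
by rewrite !dot_lincomb3_frame /gram2 uu vv uv.
Qed.

Lemma frame_map_l : frame_map u v u' v' u = u'.
Proof.
rewrite /frame_map (dotC u (cross u v)) dot_crossl.
rewrite -[RHS](lincomb3_100 u' v' (cross u' v')).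
by move: g0; rewrite /gram2 => ?; congr lincomb3; field.
Qed.

Lemma frame_map_r : frame_map u v u' v' v = v'.
Proof.
rewrite /frame_map (dotC v (cross u v)) dot_crossr (dotC v u).
rewrite -[RHS](lincomb3_010 u' v' (cross u' v')).
by move: g0; rewrite /gram2 => ?; congr lincomb3; field.
Qed.

Lemma frame_map_cross : frame_map u v u' v' (cross u v) = cross u' v'.
Proof.
rewrite /frame_map dot_crossl dot_crossr.
rewrite -[RHS](lincomb3_001 u' v' (cross u' v')).
rewrite (_ : dot (cross u v) (cross u v) = gram2 u v); last first.
  by rewrite dot_cross_cross /gram2 expr2.
by congr lincomb3; field.
Qed.

Lemma frame_map_dotl x : dot (frame_map u v u' v' x) u' = dot x u.
Proof. by have := frame_map_dot x u; rewrite frame_map_l. Qed.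

Lemma frame_map_dotr x : dot (frame_map u v u' v' x) v' = dot x v.
Proof. by have := frame_map_dot x v; rewrite frame_map_r. Qed.

Lemma frame_map_dot_cross x :
  dot (frame_map u v u' v' x) (cross u' v') = dot x (cross u v).
Proof. by have := frame_map_dot x (cross u v); rewrite frame_map_cross. Qed.

End FrameMap.

Section FrameMapInverse.
Variable R : realType.
Variables u v u' v' : vec3 R.
Hypotheses (uu : dot u' u' = dot u u) (vv : dot v' v' = dot v v)
  (uv : dot u' v' = dot u v) (g0 : gram2 u v != 0).

Let uu' : dot u u = dot u' u' := esym uu.
Let vv' : dot v v = dot v' v' := esym vv.
Let uv' : dot u v = dot u' v' := esym uv.
Let g0' : gram2 u' v' != 0. Proof. by rewrite /gram2 uu vv uv. Qed.

Lemma frame_mapK : cancel (frame_map u' v' u v) (frame_map u v u' v').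
Proof.
move=> y; rewrite -{2}(frame_mapxx y g0') /frame_map.
rewrite (frame_map_dotl uu' vv' uv' g0') (frame_map_dotr uu' vv' uv' g0').
by rewrite (frame_map_dot_cross uu' vv' uv' g0') /gram2 uu vv uv.
Qed.

Lemma frame_map_image (P : R -> R -> R -> Prop) :
  (frame_map u v u' v' @` [set x | P (dot x x) (dot x u) (dot x v)] =
   [set y | P (dot y y) (dot y u') (dot y v')])%classic.
Proof.
apply/seteqP; split=> [_ [x Px <-]|y Py] /=.
  by rewrite frame_map_dot // frame_map_dotl // frame_map_dotr.
exists (frame_map u' v' u v y); last exact: frame_mapK.
by rewrite /= frame_map_dot // frame_map_dotl // frame_map_dotr.
Qed.

End FrameMapInverse.

Lemma bigon_congruent_frame (R : realType) (c1 c2 c1' c2' : vec3 R) (r1 r2 : R) :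
  sphere c1 -> sphere c2 -> sphere c1' -> sphere c2' ->
  dot c1' c2' = dot c1 c2 -> dot c1 c2 ^+ 2 < 1 ->
  bigon_congruent c1 r1 c2 r2 c1' r1 c2' r2.
Proof.
rewrite /sphere /= => h1 h2 h1' h2' uv a2.
have uu : dot c1' c1' = dot c1 c1 by rewrite h1 h1'.
have vv : dot c2' c2' = dot c2 c2 by rewrite h2 h2'.
have g0 : gram2 c1 c2 != 0 by rewrite /gram2 h1 h2 mul1r subr_eq0 gt_eqF.
exists (frame_map c1 c2 c1' c2'); split.
- by move=> x y; rewrite /sphere /sdist /= !frame_map_dot.
- exact: (frame_map_image uu vv uv g0
    (fun n a b => (n = 1 /\ acos a < r1) /\ (n = 1 /\ acos b < r2))).
- exact: (frame_map_image uu vv uv g0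
    (fun n a b => (n = 1 /\ acos a = r1) /\ (n = 1 /\ acos b <= r2))).
- exact: (frame_map_image uu vv uv g0
    (fun n a b => (n = 1 /\ acos a <= r1) /\ (n = 1 /\ acos b = r2))).
Qed.

Section Trigonometry.
Variable R : realType.
Implicit Types (a r s t : R).

Let cos_of_acos a : -1 <= a <= 1 -> exists2 t, t \in `[0, pi] & a = cos t.
Proof. by exists (acos a); rewrite ?acosK ?in_itv //= acos_ge0 // acos_lepi. Qed.

Lemma acos_ltE a r : -1 <= a <= 1 -> 0 <= r <= pi -> (acos a < r) = (cos r < a).
Proof.
move=> /cos_of_acos [t t0pi ->] hr.
by rewrite cosK // ltr_cos // in_itv.
Qed.

Lemma acos_leE a r : -1 <= a <= 1 -> 0 <= r <= pi -> (acos a <= r) = (cos r <= a).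
Proof.
move=> /cos_of_acos [t t0pi ->] hr.
by rewrite cosK // !leNgt ltr_cos // in_itv.
Qed.

Definition gram3 a s t := 1 + 2 * a * s * t - a ^+ 2 - s ^+ 2 - t ^+ 2.

Lemma gram3_cos r s a :
  gram3 (cos r) (cos s) a = (cos (r - s) - a) * (a - cos (r + s)).
Proof.
rewrite cosB cosD.
have -> : forall k l m n : R, (k * l + m * n - a) * (a - (k * l - m * n))
  = m ^+ 2 * n ^+ 2 - (a - k * l) ^+ 2 by move=> *; ring.
by rewrite !sin2cos2 /gram3; ring.
Qed.

End Trigonometry.

Section SphericalDistance.
Variable R : realType.
Implicit Types (x y z p c : vec3 R) (r : R).

Lemma sdistC x y : sdist x y = sdist y x.
Proof. by rewrite /sdist dotC. Qed.

Lemma sdist_itv x y : sphere x -> sphere y -> 0 <= sdist x y <= pi.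
Proof.
by move=> hx hy; have h := sphere_dot_bound hx hy; rewrite acos_ge0 // acos_lepi.
Qed.

Lemma cos_sdist x y : sphere x -> sphere y -> cos (sdist x y) = dot x y.
Proof. by move=> hx hy; rewrite acosK // in_itv /= sphere_dot_bound. Qed.

Lemma sin_sdist x y : sphere x -> sphere y -> sin (sdist x y) = vnorm (cross x y).
Proof.
rewrite /sphere /= => hx hy; rewrite sin_acos ?sphere_dot_bound //.
by rewrite /vnorm dot_cross_cross hx hy mul1r expr2.
Qed.

Lemma dot_cross_sqr_sphere p u v : sphere p -> sphere u -> sphere v ->
  dot p (cross u v) ^+ 2 = gram3 (dot p u) (dot p v) (dot u v).
Proof.
by rewrite /sphere /= => hp hu hv; rewrite dot_cross_sqr hp hu hv /gram3; ring.
Qed.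

Lemma sdist_triangle x y z : sphere x -> sphere y -> sphere z ->
  sdist x z <= sdist x y + sdist y z.
Proof.
move=> hx hy hz; have uxy := sdist_itv hx hy; have vyz := sdist_itv hy hz.
have [piuv|uvpi] := lerP pi (sdist x y + sdist y z).
  by have := sdist_itv hx hz; lra.
rewrite acos_leE ?sphere_dot_bound //; last by lra.
have := sqr_ge0 (dot y (cross x z)).
rewrite dot_cross_sqr_sphere // (dotC y x) -(cos_sdist hx hy) -(cos_sdist hy hz).
rewrite gram3_cos => gram_ge0.
have : cos (sdist x y + sdist y z) <= cos (sdist x y - sdist y z).
  rewrite cosD cosB lerD2l -subr_ge0 opprK -mulr2n mulrn_wge0 //.
  by rewrite mulr_ge0 // sin_ge0_pi.
nra.
Qed.

End SphericalDistance.

Section Bigon.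
Variable R : realType.
Implicit Types (x p c : vec3 R) (r theta : R).

Lemma disk_sub c c' r r' : sphere c -> sphere c' -> sdist c c' <= r' - r ->
  (disk c r `<=` disk c' r')%classic.
Proof.
move=> hc hc' hcc' x [hx hxc]; split => //.
by have := sdist_triangle hx hc hc'; lra.
Qed.

Lemma bigon_sdist c1 r1 c2 r2 : is_bigon c1 r1 c2 r2 ->
  `|r1 - r2| < sdist c1 c2 < r1 + r2.
Proof.
case=> [[h1 h2 _ _] [[x [[hx hx1] [_ hx2]]] not12 not21]].
rewrite ltr_norml -andbA; apply/and3P; split.
- rewrite ltNge; apply/negP => h; apply: not12; apply: disk_sub => //; lra.
- rewrite ltNge; apply/negP => h; apply: not21; apply: disk_sub => //; rewrite sdistC; lra.
- have := sdist_triangle h1 hx h2; rewrite [sdist c1 x]sdistC; lra.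
Qed.

Lemma bigon_dot_bounds c1 r1 c2 r2 : is_bigon c1 r1 c2 r2 ->
  cos (r1 + r2) < dot c1 c2 < cos (r1 - r2).
Proof.
move=> B; have [[h1 h2 hr1 hr2] _] := B; have pi0 := pi_gt0 R.
have d_itv : sdist c1 c2 \in `[0, pi] by rewrite in_itv /= sdist_itv.
have sum_itv : r1 + r2 \in `[0, pi] by rewrite in_itv /=; lra.
have diff_itv : `|r1 - r2| \in `[0, pi].
  by rewrite in_itv /= normr_ge0 ler_norml; lra.
by rewrite -cos_sdist // -(cos_norm (r1 - r2)) !ltr_cos // andbC bigon_sdist.
Qed.

Lemma cos_bounds_sqr_lt1 r1 r2 a : cos (r1 + r2) < a < cos (r1 - r2) -> a ^+ 2 < 1.
Proof. by have := cos_geN1 (r1 + r2); have := cos_le1 (r1 - r2); nra. Qed.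

Lemma circle_dot c r p : sphere c -> circle c r p -> dot p c = cos r.
Proof. by move=> hc [hp <-]; rewrite cos_sdist. Qed.

Lemma circle_vnorm_cross c r p : sphere c -> circle c r p -> vnorm (cross p c) = sin r.
Proof. by move=> hc [hp <-]; rewrite sin_sdist. Qed.

Lemma corner_angleE c1 c2 p : sphere p -> dot (cross p c1) c2 != 0 ->
  corner_angle c1 c2 p =
  acos ((dot p c1 * dot p c2 - dot c1 c2) / (vnorm (cross p c1) * vnorm (cross p c2))).
Proof.
rewrite /sphere /= => hp hD.
have t12 : dot (cross p c1) (cross p c2) = - (dot p c1 * dot p c2 - dot c1 c2).
  by rewrite dot_cross_cross hp; ring.
rewrite /corner_angle /side_dir (dot_crossC p c2 c1) oppr_ge0.
have [Dlt|Dgt] : dot (cross p c1) c2 < 0 \/ 0 < dot (cross p c1) c2.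
  by move: hD; rewrite neq_lt => /orP.
- by rewrite leNgt Dlt (ltW Dlt) /= vnormN dotNl t12 opprK.
- by rewrite (ltW Dgt) leNgt Dgt /= vnormN dotNr t12 opprK.
Qed.

Lemma corner_angle_bigon c1 r1 c2 r2 p : sphere c1 -> sphere c2 ->
  cos (r1 + r2) < dot c1 c2 < cos (r1 - r2) -> corner c1 r1 c2 r2 p ->
  corner_angle c1 c2 p = acos ((cos r1 * cos r2 - dot c1 c2) / (sin r1 * sin r2)).
Proof.
move=> h1 h2 /andP[lo hi] [C1 C2]; have hp : sphere p := C1.1.
have D2 : dot (cross p c1) c2 ^+ 2 =
    (cos (r1 - r2) - dot c1 c2) * (dot c1 c2 - cos (r1 + r2)).
  by rewrite dot_crossA dot_cross_sqr_sphere // (circle_dot h1 C1) (circle_dot h2 C2) gram3_cos.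
have hD : dot (cross p c1) c2 != 0.
  by rewrite -sqrf_eq0 D2 mulf_neq0 // subr_eq0 ?(gt_eqF hi) ?(gt_eqF lo).
rewrite corner_angleE // (circle_dot h1 C1) (circle_dot h2 C2).
by rewrite (circle_vnorm_cross h1 C1) (circle_vnorm_cross h2 C2).
Qed.

Lemma exists_corner c1 r1 c2 r2 : sphere c1 -> sphere c2 ->
  0 <= r1 <= pi -> 0 <= r2 <= pi ->
  cos (r1 + r2) < dot c1 c2 < cos (r1 - r2) -> exists p, corner c1 r1 c2 r2 p.
Proof.
move=> h1 h2 hr1 hr2 bounds; have a2 := cos_bounds_sqr_lt1 bounds.
have /andP[lo hi] := bounds.
have G0 : 0 <= gram3 (cos r1) (cos r2) (dot c1 c2).
  by rewrite gram3_cos; apply: mulr_ge0; lra.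
move: h1 h2 a2 G0; rewrite /sphere /=.
set a := dot c1 c2; set k1 := cos r1; set k2 := cos r2; set G := gram3 k1 k2 a.
move=> h1 h2 a2 G0; have N0 : 1 - a ^+ 2 != 0 by rewrite subr_eq0 eq_sym lt_eqF.
pose p := lincomb3 ((k1 - a * k2) / (1 - a ^+ 2)) ((k2 - a * k1) / (1 - a ^+ 2))
  (Num.sqrt G / (1 - a ^+ 2)) c1 c2 (cross c1 c2).
have pc1 : dot p c1 = k1.
  by rewrite dot_lincomb3l h1 dot_crossl (dotC c2 c1) -/a; field.
have pc2 : dot p c2 = k2.
  by rewrite dot_lincomb3l h2 dot_crossr -/a; field.
have hp : sphere p.
  rewrite /sphere /= dot_lincomb3_frame /gram2 h1 h2 -/a.
  have sG : Num.sqrt G * Num.sqrt G = G by rewrite -expr2 sqr_sqrtr.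
  rewrite [Num.sqrt G / _ * _]mulf_div sG.
  by rewrite /G /gram3; field.
exists p; split; split=> //; rewrite /sdist ?pc1 ?pc2 cosK // in_itv //.
Qed.

Lemma bigon_center_dot c1 r1 c2 r2 theta : 0 <= theta <= pi ->
  is_bigon c1 r1 c2 r2 -> bigon_has_angle c1 r1 c2 r2 theta ->
  dot c1 c2 = cos r1 * cos r2 - sin r1 * sin r2 * cos theta.
Proof.
move=> htheta B A; have [[h1 h2 hr1 hr2] _] := B; have pi0 := pi_gt0 R.
have bounds := bigon_dot_bounds B.
have [p P] : exists p, corner c1 r1 c2 r2 p.
  by apply: exists_corner => //; lra.
have [s1 s2] : 0 < sin r1 /\ 0 < sin r2.
  by split; apply: sin_gt0_pi; lra.
have s12 := mulr_gt0 s1 s2.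
have cos_bounds : -1 <= (cos r1 * cos r2 - dot c1 c2) / (sin r1 * sin r2) <= 1.
  by move: bounds; rewrite cosD cosB ler_pdivlMr // ler_pdivrMr // => ?; lra.
have := A p P; rewrite (corner_angle_bigon h1 h2 bounds P) => /(congr1 cos).
rewrite acosK ?in_itv // => <-.
by field; rewrite !gt_eqF.
Qed.

End Bigon.

Section Existence.
Variable R : realType.
Implicit Types (r s t d theta : R).

Definition equator t : vec3 R := V3 (cos t) (sin t) 0.

Lemma equator_sphere t : sphere (equator t).
Proof. by rewrite /sphere /= /dot /= -(cos2Dsin2 t); ring. Qed.

Lemma sdist_equator s t : `|s - t| <= pi -> sdist (equator s) (equator t) = `|s - t|.
Proof.
move=> st; rewrite /sdist (_ : dot _ _ = cos (s - t)); last first.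
  by rewrite cosB /dot /=; ring.
by rewrite -cos_norm cosK // in_itv /= normr_ge0.
Qed.

Lemma equator_in_disk r s t : r <= pi -> - r < t - s < r ->
  disk (equator s) r (equator t).
Proof.
move=> rpi; rewrite -ltr_norml => ts; split; first exact: equator_sphere.
by rewrite sdist_equator // (le_trans (ltW ts)).
Qed.

Lemma equator_notin_disk r s t : r <= `|t - s| <= pi ->
  ~ disk (equator s) r (equator t).
Proof. by move=> /andP[rts tspi] [_]; rewrite sdist_equator //; lra. Qed.

Lemma is_bigon_equator r1 r2 d : 0 < r1 < pi / 2 -> 0 < r2 < pi / 2 ->
  `|r1 - r2| < d < r1 + r2 -> is_bigon (equator 0) r1 (equator d) r2.
Proof.
move=> hr1 hr2 /andP[+ dhi]; rewrite ltr_norml => dlo; have pi0 := pi_gt0 R.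
split; first by split; try exact: equator_sphere.
split.
- exists (equator ((d + r1 - r2) / 2)).
  by split; apply: equator_in_disk; lra.
- move=> sub; have /sub : disk (equator 0) r1 (equator ((d - r1 - r2) / 2)).
    by apply: equator_in_disk; lra.
  by apply: equator_notin_disk; rewrite distrC ger0_norm; lra.
- move=> sub; have /sub : disk (equator d) r2 (equator ((d + r1 + r2) / 2)).
    by apply: equator_in_disk; lra.
  by apply: equator_notin_disk; rewrite subr0 ger0_norm; lra.
Qed.

Lemma exists_bigon r1 r2 theta : 0 < theta < pi ->
  0 < r1 < pi / 2 -> 0 < r2 < pi / 2 ->
  exists c1 c2, is_bigon c1 r1 c2 r2 /\ bigon_has_angle c1 r1 c2 r2 theta.
Proof.
move=> htheta hr1 hr2; have pi0 := pi_gt0 R.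
have [s1 s2] : 0 < sin r1 /\ 0 < sin r2.
  by split; apply: sin_gt0_pi; lra.
have s12 := mulr_gt0 s1 s2.
have [ct1 ctN1] : cos theta < 1 /\ -1 < cos theta.
  rewrite -cospi -cos0; split; rewrite ltr_cos ?in_itv //=; lra.
set a := cos r1 * cos r2 - sin r1 * sin r2 * cos theta.
have lo : cos (r1 + r2) < a by rewrite cosD /a; nra.
have hi : a < cos (r1 - r2) by rewrite cosB /a; nra.
have ha : -1 <= a <= 1.
  by have := cos_geN1 (r1 + r2); have := cos_le1 (r1 - r2); move=> *; lra.
have hd : `|r1 - r2| < acos a < r1 + r2.
  have sum_itv : 0 <= r1 + r2 <= pi by lra.
  have diff_itv : 0 <= `|r1 - r2| <= pi.
    by rewrite normr_ge0 ler_norml; lra.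
  by rewrite acos_ltE // lo andbT ltNge acos_leE // cos_norm -ltNge.
exists (equator 0), (equator (acos a)); split; first exact: is_bigon_equator.
move=> p P; have e : dot (equator 0) (equator (acos a)) = a.
  by rewrite /dot /= cos0 sin0 acosK ?in_itv //; ring.
have bounds : cos (r1 + r2) < dot (equator 0) (equator (acos a)) < cos (r1 - r2).
  by rewrite e lo hi.
rewrite (corner_angle_bigon (equator_sphere _) (equator_sphere _) bounds P) e.
rewrite (_ : (cos r1 * cos r2 - a) / (sin r1 * sin r2) = cos theta).
  by rewrite cosK // in_itv /=; lra.
by rewrite /a; field; rewrite !gt_eqF.
Qed.

End Existence.

Theorem lemma3p1 (R : realType) (theta r1 r2 : R) :
  0 < theta < pi -> 0 < r1 < pi / 2 -> 0 < r2 < pi / 2 ->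
  (exists c1 c2 : vec3 R,
      is_bigon c1 r1 c2 r2 /\ bigon_has_angle c1 r1 c2 r2 theta) /\
  (forall c1 c2 c1' c2' : vec3 R,
      is_bigon c1 r1 c2 r2 -> bigon_has_angle c1 r1 c2 r2 theta ->
      is_bigon c1' r1 c2' r2 -> bigon_has_angle c1' r1 c2' r2 theta ->
      bigon_congruent c1 r1 c2 r2 c1' r1 c2' r2).
Proof.
move=> htheta hr1 hr2; split; first exact: exists_bigon.
move=> c1 c2 c1' c2' B A B' A'.
have [[h1 h2 _ _] _] := B; have [[h1' h2' _ _] _] := B'.
have htheta' : 0 <= theta <= pi by lra.
apply: bigon_congruent_frame => //.
  by rewrite (bigon_center_dot htheta' B A) (bigon_center_dot htheta' B' A').
exact/cos_bounds_sqr_lt1/(bigon_dot_bounds B).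
Qed.
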